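(* Let $A$ be a calibrated $R$-superalgebra with basis $B^A=B^A_{\mathfrak a}\sqcup B^A_{\mathfrak c}\sqcup B^A_{\bar1}$, and let $e\in\mathfrak a$ be an idempotent such that $be=b$ or $be=0$ for every $b\in B^A$. Regard $Ae$ as a calibrated $A$-supermodule with $(Ae)_{\mathfrak a}=\mathfrak ae$ and $(Ae)_{\mathfrak c}=\mathfrak ce$. Then $\tilde\Gamma^d(Ae)\cong(\tilde\Gamma^dA)\,\eta^{e^d}$ as $\tilde\Gamma^dA$-supermodules, where $\eta^{e^d}=e^{\otimes d}$.
   Context: Let $R$ be a principal ideal domain of characteristic $0$. A calibrated $R$-supermodule is a free $R$-supermodule $V=V_{\bar0}\oplus V_{\bar1}$ of finite rank with a decomposition $V_{\bar0}=V_{\mathfrak a}\oplus V_{\mathfrak c}$ into free $R$-submodules, with chosen bases $B_{\mathfrak a},B_{\mathfrak c},B_{\bar1}$ and a total order on their union $B$. $\mathfrak S_d$ acts on $V^{\otimes d}$ by $(v_1\otimes\cdots\otimes v_d)^\sigma=(-1)^{\langle\sigma;\mathbf v\rangle}v_{\sigma1}\otimes\cdots\otimes v_{\sigma d}$, with $\langle\sigma;\mathbf v\rangle$ the number of $k<l$ with $\sigma^{-1}k>\sigma^{-1}l$ and $v_k,v_l$ odd; $\Gamma^dV$ = invariants. For $\mathbf b\in B^d$: $\langle\mathbf b\rangle$ = number of $k<l$ with $b_k,b_l\in B_{\bar1}$ and $b_k>b_l$; $[\mathbf b]^!_{\mathfrak c}=\prod_{b\in B_{\mathfrak c}}\#\{k:b_k=b\}!$;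 $\mathrm{Seq}(B,d)$ = tuples in which only even basis elements may repeat; $x_{\mathbf b}=\sum(-1)^{\langle\mathbf b\rangle+\langle\mathbf b'\rangle}b'_1\otimes\cdots\otimes b'_d$ over distinct place-permutations $\mathbf b'$ of $\mathbf b$; $y_{\mathbf b}=[\mathbf b]^!_{\mathfrak c}x_{\mathbf b}$; $\tilde\Gamma^dV=\mathrm{span}_R\{y_{\mathbf b}\}$. A calibrated $R$-superalgebra is an $R$-superalgebra $A$, free of finite rank, with $A_{\bar0}=\mathfrak a\oplus\mathfrak c$ (free $R$-submodules), $\mathfrak a$ a unital subalgebra; for $\mathbf a\in\mathrm{Seq}(B^A,d)$ write $\eta^{\mathbf a}=y_{\mathbf a}\in\tilde\Gamma^dA$. $\tilde\Gamma^dA$ is a unital subsuperalgebra of the superalgebra $A^{\otimes d}$ (product $(a_1\otimes\cdots)(b_1\otimes\cdots)=(-1)^{\langle\mathbf a,\mathbf b\rangle}a_1b_1\otimes\cdots$, $\langle\mathbf a,\mathbf b\rangle$ = number of $k>l$ with $a_k,b_l$ odd). A calibrated $A$-supermodule is an $A$-supermodule which is calibrated with $\mathfrak aV_{\mathfrak a}\subseteq V_{\mathfrak a}$; for such $V$, $\tilde\Gamma^dV$ is a $\tilde\Gamma^dA$-supermodule via the natural action of $A^{\otimes d}$ on $V^{\otimes d}$ (with the sign $(-1)^{\langle\mathbf a,\mathbf v\rangle}$). *)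

From HB Require Import structures.
From mathcomp Require Import all_boot all_order all_algebra.
Set Implicit Arguments. Unset Strict Implicit. Unset Printing Implicit Defensive.
Import Order.TTheory GRing.Theory Num.Theory.
Local Open Scope ring_scope.

Definition is_ideal (R : comNzRingType) (S : R -> Prop) :=
  [/\ S 0, (forall x y, S x -> S y -> S (x + y)) & (forall r x, S x -> S (r * x))].
Definition is_PID (R : idomainType) :=
  forall S : R -> Prop, is_ideal S -> exists g : R, forall x, S x <-> exists r, x = r * g.
Definition char0 (R : nzRingType) := forall n : nat, (0 < n)%N -> n%:R != 0 :> R.

(* Every basis element is of kind 𝔞 (even), 𝔠 (even) or odd. *)
Inductive bkind := Ka | Kc | Kodd.
Definition bkind_eqb (x y : bkind) :=
  match x, y with Ka, Ka | Kc, Kc | Kodd, Kodd => true | _, _ => false end.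
Lemma bkind_eqP : Equality.axiom bkind_eqb.
Proof. by case; case; constructor. Qed.
HB.instance Definition _ := hasDecEq.Build bkind bkind_eqP.

Definition strict_total (I : eqType) (lt : rel I) :=
  [/\ irreflexive lt, transitive lt & forall x y, x != y -> lt x y || lt y x].

(* A free R-module of finite rank with basis indexed by I is modelled by
   coefficient vectors {ffun I -> R}; delta b is the basis vector b. *)
Definition delta (R : nzRingType) (I : finType) (b : I) : {ffun I -> R} :=
  [ffun i => (i == b)%:R].

Section Alg.
Variables (R : comNzRingType) (I : finType).
Variable (kind : I -> bkind).
Variable (mu : I -> I -> {ffun I -> R}). (* mu i j = product of basis elements i, j *)
Definition oddb (i : I) : bool := kind i == Kodd.
Definition smul (x y : {ffun I -> R}) : {ffun I -> R} :=
  [ffun k => \sum_i \sum_j x i * y j * mu i j k].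
(* A calibrated R-superalgebra: associative unital superalgebra,
   A_0 = 𝔞 ⊕ 𝔠, A_1 spanned by odd basis vectors, 𝔞 a unital subalgebra. *)
Definition calibrated_superalg (one : {ffun I -> R}) :=
  [/\ forall x y z, smul (smul x y) z = smul x (smul y z),
      forall x, smul one x = x /\ smul x one = x,
      forall i j k, mu i j k != 0 -> oddb k = oddb i (+) oddb j,
      forall k, one k != 0 -> kind k = Ka &
      forall i j k, kind i = Ka -> kind j = Ka -> mu i j k != 0 -> kind k = Ka].
Definition in_a (x : {ffun I -> R}) := forall k, x k != 0 -> kind k = Ka.
End Alg.

(* V^{(x)d} for V with basis J has basis the d-tuples {ffun 'I_d -> J}. *)
Section Tensor.
Variables (R : comNzRingType) (d : nat).

Section OneBasis.
Variables (J : finType) (lt : rel J) (kind : J -> bkind).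
Let oddJ (j : J) := kind j == Kodd.

Definition inv_odd (b : {ffun 'I_d -> J}) : nat :=
  #|[set kl : 'I_d * 'I_d | [&& (kl.1 < kl.2)%N, oddJ (b kl.1), oddJ (b kl.2)
                               & lt (b kl.2) (b kl.1)]]|.
Definition is_seq (b : {ffun 'I_d -> J}) : bool :=
  [forall k, forall l, ((k != l) && (b k == b l)) ==> ~~ oddJ (b k)].
(* x_b = sum over distinct place permutations b' of b of (-1)^(<b>+<b'>) b' *)
Definition xb (b : {ffun 'I_d -> J}) : {ffun {ffun 'I_d -> J} -> R} :=
  [ffun t : {ffun 'I_d -> J} => if perm_eq (codom b) (codom t) then (-1) ^+ (inv_odd b + inv_odd t) else 0].
Definition fact_c (b : {ffun 'I_d -> J}) : R :=
  \prod_(x : J | kind x == Kc) ((count_mem x (codom b))`!)%:R.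
Definition yb (b : {ffun 'I_d -> J}) : {ffun {ffun 'I_d -> J} -> R} :=
  [ffun t => fact_c b * xb b t].
Definition GammaT (t : {ffun {ffun 'I_d -> J} -> R}) : Prop :=
  exists c : {ffun 'I_d -> J} -> R,
    forall t', t t' = \sum_(b | is_seq b) c b * yb b t'.
Definition tpar (t : {ffun 'I_d -> J}) : bool := odd #|[set k | oddJ (t k)]|.
Definition homog (p : bool) (x : {ffun {ffun 'I_d -> J} -> R}) :=
  forall t, x t != 0 -> tpar t = p.
End OneBasis.

(* action of A^{(x)d} on V^{(x)d}, given action constants act i j = b_i . v_j *)
Section Action.
Variables (I J : finType) (kindI : I -> bkind) (kindJ : J -> bkind).
Variable (act : I -> J -> {ffun J -> R}).
Definition sgnAV (a : {ffun 'I_d -> I}) (w : {ffun 'I_d -> J}) : nat :=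
  #|[set kl : 'I_d * 'I_d | [&& (kl.2 < kl.1)%N, kindI (a kl.1) == Kodd
                                & kindJ (w kl.2) == Kodd]]|.
Definition actT (X : {ffun {ffun 'I_d -> I} -> R}) (v : {ffun {ffun 'I_d -> J} -> R})
  : {ffun {ffun 'I_d -> J} -> R} :=
  [ffun t : {ffun 'I_d -> J} => \sum_a \sum_w X a * v w * (-1) ^+ sgnAV a w * \prod_k act (a k) (w k) (t k)].
End Action.

Definition tpow (I : finType) (e : {ffun I -> R}) : {ffun {ffun 'I_d -> I} -> R} :=
  [ffun t : {ffun 'I_d -> I} => \prod_k e (t k)].
End Tensor.

Section Ae.
Variables (R : comNzRingType) (I : finType) (mu : I -> I -> {ffun I -> R}) (e : {ffun I -> R}).
Definition AeB := {b : I | smul mu (delta R b) e == delta R b}.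
Definition AeLt (lt : rel I) : rel AeB := fun x y => lt (val x) (val y).
Definition AeKind (kind : I -> bkind) : AeB -> bkind := fun x => kind (val x).
(* a_i . b_j = a_i b_j (which lies in Ae), written in the basis of Ae *)
Definition AeAct : I -> AeB -> {ffun AeB -> R} :=
  fun i j => [ffun j' : AeB => mu i (val j) (val j')].
End Ae.
Arguments AeB {R I} mu e.
Arguments AeLt {R I} mu e lt _ _.
Arguments AeKind {R I} mu e kind _.
Arguments AeAct {R I} mu e i j.

(* P, Q: submodules of V^{(x)d}, W^{(x)d}; actP, actQ: the actions of A^{(x)d};
   G: the acting algebra tilde Gamma^d A. *)
Definition superiso (R : comNzRingType) (d : nat) (I U W : finType)
  (kindU : U -> bkind) (kindW : W -> bkind)
  (G : {ffun {ffun 'I_d -> I} -> R} -> Prop)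
  (P : {ffun {ffun 'I_d -> U} -> R} -> Prop) (Q : {ffun {ffun 'I_d -> W} -> R} -> Prop)
  (actP : {ffun {ffun 'I_d -> I} -> R} -> {ffun {ffun 'I_d -> U} -> R} -> {ffun {ffun 'I_d -> U} -> R})
  (actQ : {ffun {ffun 'I_d -> I} -> R} -> {ffun {ffun 'I_d -> W} -> R} -> {ffun {ffun 'I_d -> W} -> R})
  :=
  exists f : {ffun {ffun 'I_d -> U} -> R} -> {ffun {ffun 'I_d -> W} -> R},
  [/\ (forall x y, P x -> P y -> f (x + y) = f x + f y),
      (forall (r : R) x, P x -> f [ffun t => r * x t] = [ffun t => r * f x t]),
      (forall x, P x -> Q (f x)),
      (forall x y, P x -> P y -> f x = f y -> x = y) &
   [/\ (forall y, Q y -> exists2 x, P x & f x = y),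
      (forall p x, P x -> homog kindU p x -> homog kindW p (f x)) &
      (forall X x, G X -> P x -> f (actP X x) = actQ X (f x))]].

From HB Require Import structures.
From mathcomp Require Import all_boot all_order all_algebra.
Set Implicit Arguments. Unset Strict Implicit. Unset Printing Implicit Defensive.
Import GRing.Theory.
Local Open Scope ring_scope.

(* The basis of Ae consists of the basis vectors b with b e = b, so tensors over Ae are the
   tensors over A supported on tuples of such vectors, and extension by zero embeds the
   former into the latter.  This embedding sends each y_b of Ae to the y_b of A with the
   same letters, so it maps tilde Gamma^d (Ae) onto the part of tilde Gamma^d A supported on
   those tuples; since A (Ae) is contained in Ae it commutes with the action of A^{(x)d}.
   That part is (tilde Gamma^d A) e^{(x)d}: as e is even no signs occur, and because
   b e is b or 0, multiplying X by e^{(x)d} just restricts X to those tuples. *)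

Lemma reindex_inj_support (T : Type) (idx : T) (op : Monoid.com_law idx)
    (U V : finType) (h : U -> V) (F : V -> T) :
    injective h -> (forall v, v \notin codom h -> F v = idx) ->
  \big[op/idx]_v F v = \big[op/idx]_u F (h u).
Proof.
move=> h_inj Fout; rewrite (bigID [in codom h]) /= [X in op _ X]big1 //.
by rewrite Monoid.mulm1 -big_uniq ?big_image // map_inj_uniq ?enum_uniq.
Qed.
Arguments reindex_inj_support {T idx op U V h F}.

Lemma prodr_nat_forall (R : comPzSemiRingType) (T : finType) (P : pred T) :
  \prod_i (P i)%:R = [forall i, P i]%:R :> R.
Proof.
case: (boolP [forall i, P i]) => [/forallP allP | /forallPn [i /negbTE Pi]].
  by rewrite big1 // => i _; rewrite allP.
by rewrite (bigD1 i) //= Pi mul0r.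
Qed.

Lemma delta_neq0 (R : nzRingType) (I : finType) (i : I) : delta R i != 0.
Proof. by apply/eqP => /ffunP /(_ i); rewrite !ffunE eqxx => /eqP; rewrite oner_eq0. Qed.

Lemma sum_delta_mull (R : nzRingType) (I : finType) (F : I -> R) (i : I) :
  \sum_j delta R i j * F j = F i.
Proof.
rewrite (bigD1 i) //= ffunE eqxx mul1r big1 ?addr0 // => j /negbTE ji.
by rewrite ffunE ji mul0r.
Qed.

Lemma sgnAV_even d (I J : finType) (kindI : I -> bkind) (kindJ : J -> bkind)
    (a : {ffun 'I_d -> I}) (w : {ffun 'I_d -> J}) :
  (forall k, kindJ (w k) != Kodd) -> sgnAV kindI kindJ a w = 0%N.
Proof.
move=> w_even; apply/eqP; rewrite cards_eq0; apply/eqP/setP => kl.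
by rewrite !inE (negbTE (w_even _)) !andbF.
Qed.

Section Pushforward.
Variables (R : pzRingType) (U V : finType) (h : U -> V).
Hypothesis h_inj : injective h.

Definition push (x : {ffun U -> R}) : {ffun V -> R} :=
  [ffun v => \sum_(u | h u == v) x u].

Definition pull (X : {ffun V -> R}) : {ffun U -> R} := [ffun u => X (h u)].

Lemma push_h x u : push x (h u) = x u.
Proof. by rewrite ffunE (big_pred1 u) // => u'; rewrite /= (inj_eq h_inj). Qed.

Lemma push_out x v : v \notin codom h -> push x v = 0.
Proof.
move=> vNh; rewrite ffunE big_pred0 // => u.
by apply: contraNF vNh => /eqP <-; apply: codom_f.
Qed.

Lemma pushD x y : push (x + y) = push x + push y.
Proof.
by apply/ffunP => v; rewrite !ffunE -big_split; apply: eq_bigr => u _; rewrite ffunE.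
Qed.

Lemma pushZ r (x : {ffun U -> R}) :
  push [ffun u => r * x u] = [ffun v => r * push x v].
Proof.
by apply/ffunP => v; rewrite !ffunE mulr_sumr; apply: eq_bigr => u _; rewrite ffunE.
Qed.

Lemma push_inj : injective push.
Proof. by move=> x y exy; apply/ffunP => u; rewrite -!push_h exy. Qed.

Lemma pull_push x : pull (push x) = x.
Proof. by apply/ffunP => u; rewrite ffunE push_h. Qed.

End Pushforward.

Section SubBasis.
Variables (R : comNzRingType) (I : finType) (S : pred I) (J : subFinType S) (d : nat).
Variables (lt : rel I) (kind : I -> bkind).
Local Notation ltJ := (fun x y : J => lt (val x) (val y)).
Local Notation kindJ := (fun x : J => kind (val x)).
Local Notation tupleJ := {ffun 'I_d -> J}.
Local Notation tupleI := {ffun 'I_d -> I}.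

Definition vals (t : tupleJ) : tupleI := [ffun k => val (t k)].

Lemma vals_inj : injective vals.
Proof.
move=> t t' /ffunP tt'; apply/ffunP => k; apply: val_inj.
by have := tt' k; rewrite !ffunE.
Qed.

Lemma codom_vals (t : tupleI) : (t \in codom vals) = [forall k, S (t k)].
Proof.
apply/codomP/forallP => [[t' ->] k | tS]; first by rewrite ffunE valP.
by exists [ffun k => Sub (t k) (tS k)]; apply/ffunP => k; rewrite !ffunE SubK.
Qed.

Lemma codom_vals_val (t : tupleJ) : codom (vals t) = map val (codom t).
Proof. by rewrite !codomE -!map_comp; apply: eq_map => k; rewrite /= ffunE. Qed.

Lemma inv_odd_vals t : inv_odd ltJ kindJ t = inv_odd lt kind (vals t).
Proof. by apply: eq_card => kl; rewrite !inE !ffunE. Qed.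

Lemma is_seq_vals t : is_seq kindJ t = is_seq kind (vals t).
Proof. by apply: eq_forallb => k; apply: eq_forallb => l; rewrite !ffunE val_eqE. Qed.

Lemma tpar_vals t : tpar kindJ t = tpar kind (vals t).
Proof. by congr (odd _); apply: eq_card => k; rewrite !inE ffunE. Qed.

Lemma sgnAV_vals (K : finType) (kindK : K -> bkind) (a : {ffun 'I_d -> K}) t :
  sgnAV kindK kindJ a t = sgnAV kindK kind a (vals t).
Proof. by apply: eq_card => kl; rewrite !inE ffunE. Qed.

Lemma perm_codom_vals t t' :
  perm_eq (codom (vals t)) (codom (vals t')) = perm_eq (codom t) (codom t').
Proof.
by rewrite !codom_vals_val; apply/idP/idP => [/(perm_map_inj val_inj)|/(perm_map val)].
Qed.

Lemma fact_c_vals t : fact_c R kindJ t = fact_c R kind (vals t).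
Proof.
rewrite /fact_c [RHS]big_mkcond (reindex_inj_support (@val_inj _ _ J)); last first.
  move=> i iNJ; rewrite codom_vals_val (count_memPn _) ?if_same //.
  by apply: contra iNJ => /mapP [j _ ->]; apply: codom_f.
rewrite big_mkcond; apply: eq_bigr => j _.
rewrite codom_vals_val [in RHS]count_map (@eq_count _ _ (pred1 j)) // => j'.
exact: val_eqE.
Qed.

Lemma yb_vals t t' : yb R ltJ kindJ t t' = yb R lt kind (vals t) (vals t').
Proof. by rewrite !ffunE fact_c_vals perm_codom_vals !inv_odd_vals. Qed.

Lemma yb_codom_vals (u v : tupleI) :
  yb R lt kind u v != 0 -> (u \in codom vals) = (v \in codom vals).
Proof.
rewrite !ffunE; case: ifP => [uv _ | _]; last by rewrite mulr0 eqxx.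
rewrite !codom_vals; apply/forallP/forallP => uS k.
  by have /codomP [l ->] : v k \in codom u by rewrite (perm_mem uv) codom_f.
by have /codomP [l ->] : u k \in codom v by rewrite -(perm_mem uv) codom_f.
Qed.

Lemma GammaT_push (x : {ffun tupleJ -> R}) :
  GammaT ltJ kindJ x -> GammaT lt kind (push vals x).
Proof.
case=> c xE; exists (push vals [ffun b => c b]) => t.
rewrite big_mkcond (reindex_inj_support vals_inj); last first.
  by move=> u uN; rewrite push_out ?mul0r ?if_same.
case: (boolP (t \in codom vals)) => [/codomP [t' ->] | tN].
  rewrite push_h ?xE; last exact: vals_inj.
  rewrite big_mkcond; apply: eq_bigr => b _.
  by rewrite is_seq_vals yb_vals push_h ?(ffunE c) //; exact: vals_inj.
rewrite push_out // big1 // => b _; case: ifP => // _.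
have [->|/yb_codom_vals] := eqVneq (yb R lt kind (vals b) t) 0; first by rewrite mulr0.
by rewrite codom_f (negbTE tN).
Qed.

Lemma GammaT_pull (X : {ffun tupleI -> R}) :
  GammaT lt kind X -> GammaT ltJ kindJ (pull vals X).
Proof.
case=> c XE; exists (fun b => c (vals b)) => t.
rewrite ffunE XE big_mkcond (reindex_inj_support vals_inj); last first.
  move=> u uN; case: ifP => // _.
  have [->|/yb_codom_vals] := eqVneq (yb R lt kind u (vals t)) 0; first by rewrite mulr0.
  by rewrite codom_f (negbTE uN).
by rewrite [RHS]big_mkcond; apply: eq_bigr => b _; rewrite is_seq_vals yb_vals.
Qed.

Lemma homog_push p (x : {ffun tupleJ -> R}) :
  homog kindJ p x -> homog kind p (push vals x).
Proof.
move=> xp t; case: (boolP (t \in codom vals)) => [/codomP [t' ->] | tN].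
  by rewrite push_h -?tpar_vals; [exact: xp | exact: vals_inj].
by rewrite push_out ?eqxx.
Qed.

End SubBasis.
Arguments vals {I S J d} t.
Arguments vals_inj {I S J d}.

Section IdempotentModule.
Variables (R : comNzRingType) (I : finType) (mu : I -> I -> {ffun I -> R}).

Lemma smul_deltal (i : I) y k : smul mu (delta R i) y k = \sum_j y j * mu i j k.
Proof.
rewrite ffunE -[RHS](sum_delta_mull (fun i' => \sum_j y j * mu i' j k)).
by apply: eq_bigr => i' _; rewrite mulr_sumr; apply: eq_bigr => j _; rewrite !mulrA.
Qed.

Lemma smul_delta (i j : I) : smul mu (delta R i) (delta R j) = mu i j.
Proof. by apply/ffunP => k; rewrite smul_deltal sum_delta_mull. Qed.

Lemma smul_suml x y k : smul mu x y k = \sum_i x i * smul mu (delta R i) y k.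
Proof.
rewrite ffunE; apply: eq_bigr => i _; rewrite smul_deltal mulr_sumr.
by apply: eq_bigr => j _; rewrite !mulrA.
Qed.

Variables (kind : I -> bkind) (e : {ffun I -> R}).
Local Notation fixed_by_e := (fun b => smul mu (delta R b) e == delta R b).
Local Notation Ae := (AeB mu e).
Local Notation kindAe := (AeKind mu e kind).

Hypothesis e_basis :
  forall b, smul mu (delta R b) e = delta R b \/ smul mu (delta R b) e = 0.

Lemma smul_delta_e i k : smul mu (delta R i) e k = ((k == i) && fixed_by_e i)%:R.
Proof.
case: (e_basis i) => ->; first by rewrite ffunE eqxx andbT.
by rewrite ffunE [0 == _]eq_sym (negbTE (delta_neq0 R i)) andbF.
Qed.

Hypothesis smulA : forall x y z, smul mu (smul mu x y) z = smul mu x (smul mu y z).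

(* b_i b_j = b_i (b_j e) = (b_i b_j) e, and right multiplication by e kills the
   coordinates outside Ae. *)
Lemma mu_closed i j k : fixed_by_e j -> ~~ fixed_by_e k -> mu i j k = 0.
Proof.
move=> /eqP je kNe; rewrite -smul_delta -je -smulA smul_suml big1 // => i' _.
rewrite smul_delta_e; case: eqP => [ki'|]; last by rewrite mulr0.
by rewrite -ki' (negbTE kNe) mulr0.
Qed.

Variable d : nat.
Hypothesis e_even : in_a kind e.

Lemma sum_tpow_mu (a t : {ffun 'I_d -> I}) :
  \sum_w tpow d e w * (-1) ^+ sgnAV kind kind a w * \prod_k mu (a k) (w k) (t k)
    = \prod_k smul mu (delta R (a k)) e (t k).
Proof.
have sign_free w : tpow d e w * (-1) ^+ sgnAV kind kind a w = tpow d e w.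
  case: (boolP [forall k, e (w k) != 0]) => [/forallP ew | /forallPn [k /negPn /eqP ew]].
    by rewrite sgnAV_even ?mulr1 // => k; rewrite (e_even (ew k)).
  by rewrite ffunE (bigD1 k) //= ew !mul0r.
rewrite (eq_bigr (fun w : {ffun 'I_d -> I} => \prod_k (e (w k) * mu (a k) (w k) (t k))))
  => [|w _].
  rewrite -(bigA_distr_bigA (fun k j => e j * mu (a k) j (t k))).
  by apply: eq_bigr => k _; rewrite smul_deltal.
by rewrite sign_free ffunE big_split.
Qed.

Local Notation valsAe := (@vals _ _ Ae d).

Lemma act_tpow (X : {ffun {ffun 'I_d -> I} -> R}) :
  actT kind kind mu X (tpow d e) = push valsAe (pull valsAe X).
Proof.
apply/ffunP => t; rewrite ffunE.
transitivity (\sum_a X a * \prod_k smul mu (delta R (a k)) e (t k)).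
  apply: eq_bigr => a _; rewrite -sum_tpow_mu mulr_sumr.
  by apply: eq_bigr => w _; rewrite !mulrA.
rewrite (bigD1 t) //= [X in _ + X]big1 ?addr0 => [|a at_neq]; last first.
  have [k akt] : exists k, a k != t k.
    apply/existsP; apply: contraNT at_neq => /existsPn at_eq.
    by apply/eqP/ffunP => k; apply/eqP/negPn/at_eq.
  by rewrite (bigD1 k) //= smul_delta_e eq_sym (negbTE akt) mul0r mulr0.
under eq_bigr do rewrite smul_delta_e eqxx /=.
rewrite prodr_nat_forall -(@codom_vals _ _ Ae).
case: (boolP (t \in codom valsAe)) => [/codomP [t' ->] | tN].
  by rewrite push_h ?ffunE ?mulr1 //; apply: vals_inj.
by rewrite push_out // mulr0.
Qed.

Lemma push_act (X : {ffun {ffun 'I_d -> I} -> R}) (x : {ffun {ffun 'I_d -> Ae} -> R}) :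
  push valsAe (actT kind kindAe (AeAct mu e) X x)
    = actT kind kind mu X (push valsAe x).
Proof.
apply/ffunP => t; rewrite [RHS]ffunE.
have sum_over_Ae a :
    \sum_w X a * push valsAe x w * (-1) ^+ sgnAV kind kind a w * \prod_k mu (a k) (w k) (t k)
  = \sum_w X a * x w * (-1) ^+ sgnAV kind kindAe a w * \prod_k mu (a k) (val (w k)) (t k).
  rewrite (reindex_inj_support (@vals_inj _ _ Ae d)) => [|w wN]; last first.
    by rewrite push_out ?mulr0 ?mul0r.
  apply: eq_bigr => w _; rewrite push_h ?sgnAV_vals; last exact: vals_inj.
  by congr (_ * _); apply: eq_bigr => k _; rewrite ffunE.
under eq_bigr do rewrite sum_over_Ae.
case: (boolP (t \in codom valsAe)) => [/codomP [t' ->] | tN].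
  rewrite push_h ?ffunE; last exact: vals_inj.
  apply: eq_bigr => a _; apply: eq_bigr => w _.
  by congr (_ * _); apply: eq_bigr => k _; rewrite !ffunE.
rewrite push_out // big1 // => a _; rewrite big1 // => w _.
move: tN; rewrite codom_vals => /forallPn [k tkN].
by rewrite (bigD1 k) //= (mu_closed _ (valP (w k))) // mul0r mulr0.
Qed.

End IdempotentModule.

Theorem lemma3p17
  (R : idomainType) (HPID : is_PID R) (Hchar : char0 R)
  (I : finType) (lt : rel I) (Hlt : strict_total lt) (kind : I -> bkind)
  (mu : I -> I -> {ffun I -> R}) (one : {ffun I -> R})
  (HA : calibrated_superalg kind mu one)
  (e : {ffun I -> R}) (He_a : in_a kind e) (He_idem : smul mu e e = e)
  (He_basis : forall b : I, smul mu (delta R b) e = delta R b \/ smul mu (delta R b) e = 0)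
  (d : nat) :
  superiso (AeKind mu e kind) kind
    (GammaT lt kind)
    (GammaT (AeLt mu e lt) (AeKind mu e kind))
    (fun y => exists2 X, GammaT lt kind X & y = actT kind kind mu X (tpow d e))
    (actT kind (AeKind mu e kind) (AeAct mu e))
    (actT kind kind mu).
Proof.
case: HA => smulA _ _ _ _.
have inj_vals := @vals_inj _ _ (AeB mu e) d.
exists (push (@vals _ _ (AeB mu e) d)); split.
- by move=> x y _ _; apply: pushD.
- by move=> r x _; apply: pushZ.
- move=> x Gx; exists (push vals x); first exact: GammaT_push.
  by rewrite (act_tpow He_basis He_a) (pull_push inj_vals).
- by move=> x y _ _; apply: (push_inj inj_vals).
split.
- move=> _ [X GX ->]; exists (pull vals X); first exact: GammaT_pull.
  by rewrite (act_tpow He_basis He_a).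
- by move=> p x _; apply: homog_push.
- by move=> X x _ _; apply: (push_act _ He_basis smulA).
Qed.
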